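(* Let $\alpha\in\mathbb R$, $\gamma,\delta\ge0$, $h>0$, $\tau>0$, and consider the Compact6 method with forward Euler time stepping applied to the linear equation $u_t+\alpha u_x=\gamma u_{xx}+\delta u_{xxt}$, whose amplification factor for the Fourier mode with phase $\theta$ is \[ \mathcal{L}(\theta)=\frac{\Big(1+\dfrac{\gamma\tau-\delta}{2h^2}P\Big)-\dfrac{i\alpha\tau}{6h}Q}{1-\dfrac{\delta}{2h^2}P},\qquad P=\frac{48\cos\theta+3\cos 2\theta-51}{11+4\cos\theta},\quad Q=\frac{28\sin\theta+\sin 2\theta}{3+2\cos\theta}. \] The method is stable, in the sense that $|\mathcal{L}(\theta)|^2\le 1+2C\tau$, if there exists a constant $C>0$ such that \[ \tau\le\frac{2\Big(1-\dfrac{\delta P}{2h^2}\Big)\Big(C-\dfrac{C\delta P}{2h^2}-\dfrac{\gamma P}{2h^2}\Big)}{\dfrac{\gamma^2P^2}{4h^4}+\dfrac{\alpha^2Q^2}{36h^2}}. \]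
   Context: The Compact6 method approximates $u_x$ and $u_{xx}$ at grid points $x_j$ (spacing $h$) by the sixth-order compact schemes $\tfrac13u'_{j-1}+u'_j+\tfrac13u'_{j+1}=\tfrac1h(-\tfrac1{36}u_{j-2}-\tfrac79u_{j-1}+\tfrac79u_{j+1}+\tfrac1{36}u_{j+2})$ and $\tfrac2{11}u''_{j-1}+u''_j+\tfrac2{11}u''_{j+1}=\tfrac1{h^2}(\tfrac3{44}u_{j-2}+\tfrac{12}{11}u_{j-1}-\tfrac{51}{22}u_j+\tfrac{12}{11}u_{j+1}+\tfrac3{44}u_{j+2})$, and time is discretized by forward Euler with step $\tau$, giving $u^{n+1}_j=\mathcal L(\theta)u^n_j$ for a Fourier mode $u_j=\hat u e^{ij\theta}$, $\theta=\omega h$. Stability (relaxed von Neumann) means $|\mathcal L(\theta)|\le 1+C\tau$, taken here in the form $|\mathcal L(\theta)|^2\le 1+2C\tau$. *)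

From Stdlib Require Import Reals.
From Coquelicot Require Import Coquelicot.
Open Scope R_scope.

Definition P6 (theta : R) : R :=
  (48 * cos theta + 3 * cos (2 * theta) - 51) / (11 + 4 * cos theta).
Definition Q6 (theta : R) : R :=
  (28 * sin theta + sin (2 * theta)) / (3 + 2 * cos theta).

Definition amp (alpha gamma delta h tau theta : R) : C :=
  Cdiv
    (Cminus (RtoC (1 + (gamma * tau - delta) / (2 * h ^ 2) * P6 theta))
            (Cmult Ci (RtoC (alpha * tau / (6 * h) * Q6 theta))))
    (RtoC (1 - delta / (2 * h ^ 2) * P6 theta)).

Definition bound_num (gamma delta h Cst theta : R) : R :=
  2 * (1 - delta * P6 theta / (2 * h ^ 2))
    * (Cst - Cst * delta * P6 theta / (2 * h ^ 2) - gamma * P6 theta / (2 * h ^ 2)).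
Definition bound_den (alpha gamma h theta : R) : R :=
  gamma ^ 2 * P6 theta ^ 2 / (4 * h ^ 4) + alpha ^ 2 * Q6 theta ^ 2 / (36 * h ^ 2).

(** With [p = P/(2h^2) <= 0], [q = alpha Q/(6h)] and [D = 1 - delta p >= 1], the
    amplification factor is [((D + gamma tau p) - i tau q)/D], so
    [|L|^2 D^2 - D^2 = 2 D gamma tau p + tau^2 ((gamma p)^2 + q^2)].  The step
    restriction says exactly [tau ((gamma p)^2 + q^2) <= 2 D (C D - gamma p)];
    multiplying it by [tau] the terms in [gamma p] cancel and what remains is
    [2 C tau D^2]. *)

From Stdlib Require Import Reals Lra Psatz.
From Coquelicot Require Import Coquelicot.
Open Scope R_scope.

Lemma P6_nonpos (theta : R) : P6 theta <= 0.
Proof.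
  unfold P6; rewrite cos_2a_cos.
  pose proof (COS_bound theta) as [Hlo Hhi].
  replace (48 * cos theta + 3 * (2 * cos theta * cos theta - 1) - 51)
    with (6 * (cos theta - 1) * (cos theta + 9)) by ring.
  apply Rle_div_l; [lra|]; nra.
Qed.

Lemma Cmod_sub_Ci_sqr (a b : R) : Cmod (RtoC a - Ci * RtoC b) ^ 2 = a ^ 2 + b ^ 2.
Proof. rewrite Cmod2_alt; simpl; ring. Qed.

Lemma Cmod_div_RtoC_sqr (z : C) (d : R) :
  d <> 0 -> Cmod (z / RtoC d) ^ 2 = Cmod z ^ 2 / d ^ 2.
Proof.
  intro Hd.
  rewrite Cmod_div, Cmod_R by (intro H; apply Hd; now injection H).
  unfold Rdiv; rewrite Rpow_mult_distr, pow_inv, <- (pow2_abs d).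
  reflexivity.
Qed.

Lemma mul_le_of_le_div (tau N E : R) :
  0 <= E -> 0 <= N -> (E <> 0 -> tau <= N / E) -> tau * E <= N.
Proof.
  intros HE HN Hle; destruct (Req_dec E 0) as [-> | HE0].
  - lra.
  - apply Rle_div_r; [lra | auto].
Qed.

Lemma forward_Euler_amp_sqr_le (C D g p q tau : R) :
  0 < D -> 0 <= tau ->
  tau * ((g * p) ^ 2 + q ^ 2) <= 2 * D * (C * D - g * p) ->
  ((D + g * tau * p) ^ 2 + (tau * q) ^ 2) / D ^ 2 <= 1 + 2 * C * tau.
Proof.
  intros HD Htau Hstep.
  apply Rle_div_l; [nra|].
  assert (Hstep' : tau * (tau * ((g * p) ^ 2 + q ^ 2))
                   <= tau * (2 * D * (C * D - g * p)))
    by (apply Rmult_le_compat_l; assumption).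
  nra.
Qed.

Theorem theorem3 (alpha gamma delta h tau Cst : R)
  (hgamma : 0 <= gamma) (hdelta : 0 <= delta) (hh : 0 < h) (htau : 0 < tau)
  (hC : 0 < Cst)
  (hstep : forall theta : R,
      bound_den alpha gamma h theta <> 0 ->
      tau <= bound_num gamma delta h Cst theta / bound_den alpha gamma h theta) :
  forall theta : R, Cmod (amp alpha gamma delta h tau theta) ^ 2 <= 1 + 2 * Cst * tau.
Proof.
  intro theta.
  set (p := P6 theta / (2 * h ^ 2)); set (q := alpha * Q6 theta / (6 * h)).
  set (D := 1 - delta * p).
  assert (Hp : p <= 0) by (apply Rle_div_l; [nra | rewrite Rmult_0_l; apply P6_nonpos]).
  assert (HD : 1 <= D) by (unfold D; nra).
  assert (Hden : bound_den alpha gamma h theta = (gamma * p) ^ 2 + q ^ 2)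
    by (unfold bound_den, p, q; field; lra).
  assert (Hnum : bound_num gamma delta h Cst theta = 2 * D * (Cst * D - gamma * p))
    by (unfold bound_num, D, p; field; lra).
  assert (Hcond : tau * ((gamma * p) ^ 2 + q ^ 2) <= 2 * D * (Cst * D - gamma * p)).
  { rewrite <- Hden, <- Hnum; apply mul_le_of_le_div.
    - rewrite Hden; nra.
    - rewrite Hnum; apply Rmult_le_pos; nra.
    - apply hstep. }
  unfold amp.
  replace (1 + (gamma * tau - delta) / (2 * h ^ 2) * P6 theta) with (D + gamma * tau * p)
    by (unfold D, p; field; lra).
  replace (alpha * tau / (6 * h) * Q6 theta) with (tau * q) by (unfold q; field; lra).
  replace (1 - delta / (2 * h ^ 2) * P6 theta) with D by (unfold D, p; field; lra).
  rewrite Cmod_div_RtoC_sqr, Cmod_sub_Ci_sqr by lra.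
  apply forward_Euler_amp_sqr_le; lra.
Qed.
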